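(* Consider the discrete first-price auction in the model without ties with $n\ge3$ bidders whose values are drawn independently and uniformly from $X=\{0,1,\dots,x\}$. If $$x>\frac{2^{1/(n-1)}}{2^{1/(n-1)}-1},$$ then the auction has no symmetric equilibrium.
   Context: Model. There are $n$ risk-neutral bidders competing for one indivisible object. Values and bids lie in $X=\{0,1,2,\dots,x\}$ for some $x\in\mathbb N$. Each bidder privately learns a value drawn independently and uniformly from $X$. Each bidder submits a bid in $X$. A (pure) strategy is a bidding function $\beta:X\to X$. In the model without ties, bidder $i$ wins iff $b_i>b_j$ for all $j\neq i$ (if the highest bid is tied, nobody wins). In the first-price auction, a bidder with value $v_i$ bidding $b_i$ gets expected payoff $(v_i-b_i)\Pr(i\text{ wins})$. An equilibrium is a profile of bidding functions such that each bidder's bidding function maximises their expected payoff given the others' bidding functions (a pure-strategy Bayes–Nash equilibrium) and such that no bidder uses a weakly dominated bidding function (a bidding function is weakly dominated if some other bidding function yields at least as high expected payoff against every profile of opponents' bidding functions, and strictly higher against some). A symmetric equilibrium is an equilibrium in which all bidders use the same bidding function. *)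

From HB Require Import structures.
From mathcomp Require Import all_boot all_order all_algebra.
From mathcomp Require Import reals exp.
Set Implicit Arguments. Unset Strict Implicit. Unset Printing Implicit Defensive.
Import Order.TTheory GRing.Theory Num.Theory.
Local Open Scope ring_scope.

(* Values and bids lie in X = {0,...,x}, represented by 'I_x.+1. *)
Definition bidfun (x : nat) := 'I_x.+1 -> 'I_x.+1.

Definition profile (n x : nat) := 'I_n -> bidfun x.

(* Model without ties: bidder i wins iff its bid is strictly higher than
   every other bidder's bid. *)
Definition wins (n x : nat) (p : profile n x) (i : 'I_n)
    (v : {ffun 'I_n -> 'I_x.+1}) : bool :=
  [forall j, (j != i) ==> (nat_of_ord (p j (v j)) < nat_of_ord (p i (v i)))%N].

(* Ex-ante expected payoff of bidder i in the first-price auction, values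
   i.i.d. uniform on X: average over all (x+1)^n value profiles of
   (v_i - b_i) * 1[i wins]. *)
Definition payoff (R : realType) (n x : nat) (p : profile n x) (i : 'I_n) : R :=
  ((x.+1 ^ n)%:R)^-1 *
  \sum_(v : {ffun 'I_n -> 'I_x.+1})
     (((nat_of_ord (v i))%:R - (nat_of_ord (p i (v i)))%:R) * (wins p i v)%:R).

Definition upd (n x : nat) (p : profile n x) (i : 'I_n) (b : bidfun x)
  : profile n x := fun j => if j == i then b else p j.

Definition is_BNE (R : realType) (n x : nat) (p : profile n x) : Prop :=
  forall (i : 'I_n) (b : bidfun x), payoff R (upd p i b) i <= payoff R p i.

Definition weakly_dominated (R : realType) (n x : nat) (i : 'I_n) (b : bidfun x)
  : Prop :=
  exists b' : bidfun x,
    (forall q : profile n x, payoff R (upd q i b) i <= payoff R (upd q i b') i) /\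
    (exists q : profile n x, payoff R (upd q i b) i < payoff R (upd q i b') i).

Definition equilibrium (R : realType) (n x : nat) (p : profile n x) : Prop :=
  is_BNE R p /\ forall i : 'I_n, ~ weakly_dominated R i (p i).

Definition symmetric_equilibrium (R : realType) (n x : nat) (b : bidfun x) : Prop :=
  equilibrium R (fun _ : 'I_n => b).

From HB Require Import structures.
From mathcomp Require Import all_boot all_order all_algebra.
From mathcomp Require Import reals exp.
From mathcomp Require Import zify lra.
Set Implicit Arguments. Unset Strict Implicit. Unset Printing Implicit Defensive.
Import Order.TTheory GRing.Theory Num.Theory.

(* Write k = n - 1 and let count_below b t be the number of values at which b
   bids strictly less than t.  Against n - 1 opponents using b, a bid t wins
   with probability (count_below b t / (x+1))^k, so in a symmetric Bayes-Nash
   equilibrium the bid b v maximises (v - t) * count_below b t ^ k over t at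
   every value v (a deviation at a single value isolates one term of the
   ex-ante payoff).  Undominatedness forces b v <= v, and b v < v
   for v >= 2 (lowering the bid to v - 1 weakly dominates).

   For k >= 2 these facts force the "staircase" b v = v - 1 for 2 <= v <= x,
   by induction on v: bids are monotone (single crossing), so b v >= v - 2,
   and bidding v - 2 at value v is ruled out by comparing deviations to v - 1
   at value v and to v - 3 at value v - 1.  At the top value x the staircase
   then yields 2 (x-1)^k <= x^k, which contradicts the hypothesis of the
   theorem, equivalent to x^k < 2 (x-1)^k. *)

Definition count_below {x : nat} (b : bidfun x) (t : nat) : nat :=
  (\sum_(s : 'I_x.+1) (b s < t))%N.

Definition bid {x : nat} (b : bidfun x) (v : nat) : nat := b (inord v).

Lemma sum_ord_lt N m : (\sum_(s < N) (s < m))%N = minn m N.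
Proof.
elim: N => [|N IH]; first by rewrite big_ord0; lia.
by rewrite big_ord_recr /= IH; case: (ltnP N m) => h; lia.
Qed.

Section Counting.
Variables (x : nat) (b : bidfun x).

Lemma bidE (s : 'I_x.+1) : (b s : nat) = bid b s.
Proof. by rewrite /bid inord_val. Qed.

Lemma count_below_lb m t : (m <= x.+1)%N ->
  (forall s, (s < m)%N -> (bid b s < t)%N) -> (m <= count_below b t)%N.
Proof.
move=> mx below; rewrite -(minn_idPl mx) -sum_ord_lt; apply: leq_sum => s _.
by case: ltnP => // /below; rewrite -bidE => ->.
Qed.

Lemma count_below_ub m t :
  (forall s, (s <= x)%N -> (bid b s < t)%N -> (s < m)%N) ->
  (count_below b t <= m)%N.
Proof.
move=> above; apply: (@leq_trans (minn m x.+1)); last exact: geq_minl.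
rewrite -sum_ord_lt; apply: leq_sum => s _.
by rewrite bidE; case: (boolP (bid b s < t)) => // /(above _ (leq_ord s)) ->.
Qed.

Lemma count_below0 : count_below b 0 = 0%N.
Proof. by rewrite /count_below big1. Qed.

End Counting.

(* Single crossing: take two bids a > 0 apart with winning weights Cu (higher
   bid) and Cw (lower bid).  If a value with margin p at the higher bid
   weakly prefers it, while a value q > 0 higher weakly prefers the lower bid,
   then the higher bid has weight 0. *)
Lemma crossing_forces_zero p q a Cu Cw : (0 < q)%N -> (0 < a)%N ->
  ((p + a) * Cw <= p * Cu)%N -> ((q + p) * Cu <= (q + p + a) * Cw)%N ->
  Cu = 0%N.
Proof.
move=> q0 a0 Hu Hw.
have CuCw : (q * Cu <= q * Cw)%N by nia.
rewrite leq_pmul2l // in CuCw.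
nia.
Qed.

Lemma leq_exp2r_any e m c : (m <= c)%N -> (m ^ e <= c ^ e)%N.
Proof. by case: e => // e; rewrite leq_exp2r. Qed.

Lemma pow_ratio_lt a c k : (2 <= k)%N -> (a <= c)%N -> (2 * a ^ 2 < c ^ 2)%N ->
  (2 * a ^ k < c ^ k)%N.
Proof.
move=> k2 ac sq; rewrite -(subnK k2) !expnD.
have := leq_exp2r_any (k - 2) ac; have : (0 < c ^ (k - 2))%N by rewrite expn_gt0; lia.
move: (a ^ (k - 2))%N (c ^ (k - 2))%N => A C; nia.
Qed.

Lemma pow_ratio_le a c k : (2 <= k)%N -> (a <= c)%N -> (2 * a ^ 2 <= c ^ 2)%N ->
  (2 * a ^ k <= c ^ k)%N.
Proof.
move=> k2 ac sq; rewrite -(subnK k2) !expnD.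
have := leq_exp2r_any (k - 2) ac; move: (a ^ (k - 2))%N (c ^ (k - 2))%N => A C; nia.
Qed.

Lemma double_undercut_bound v k : (0 < k)%N ->
  (v.+1 ^ k <= 2 * v.-1 ^ k)%N -> (2 * v.-2 ^ k <= v.-1 ^ k)%N -> (v <= 3)%N.
Proof.
move=> k0 up down.
have : ((v.+1 * v.-2) ^ k <= (v.-1 * v.-1) ^ k)%N.
  rewrite !expnMn; move: up down.
  move: (v.+1 ^ k)%N (v.-2 ^ k)%N (v.-1 ^ k)%N => A D C; nia.
rewrite leq_exp2r //; nia.
Qed.

Lemma gap_forces_four x k : (2 <= k)%N -> (x ^ k < 2 * x.-1 ^ k)%N -> (4 <= x)%N.
Proof.
move=> k2; apply: contraTT; rewrite -!leqNgt => x3.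
have [x_le1 | x_ge2] := leqP x 1.
  by rewrite (_ : x.-1 = 0)%N ?exp0n ?muln0 //; lia.
by apply: pow_ratio_le => //; [lia | have [->|->] : x = 2 \/ x = 3 by lia].
Qed.

Definition underbids {x : nat} (b : bidfun x) : Prop :=
  forall v : nat, (v <= x)%N -> (bid b v <= v)%N.

Definition shades {x : nat} (b : bidfun x) : Prop :=
  forall v : nat, (2 <= v <= x)%N -> (bid b v < v)%N.

Definition best_reply {x : nat} (k : nat) (b : bidfun x) : Prop :=
  forall v t : nat, (v <= x)%N -> (t <= v)%N ->
  ((v - t) * count_below b t ^ k <= (v - bid b v) * count_below b (bid b v) ^ k)%N.

Definition staircase {x : nat} (b : bidfun x) (m : nat) : Prop :=
  forall s : nat, (2 <= s <= m)%N -> bid b s = s.-1.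

Section BestReply.
Variables (x k : nat) (b : bidfun x).
Implicit Types u v w t m : nat.
Hypotheses (underbid : underbids b) (br : best_reply k b).

Lemma bid_monotone u w : (u < w <= x)%N -> (0 < count_below b (bid b u))%N ->
  (bid b u <= bid b w)%N.
Proof.
move=> /andP[uw wx] pos; rewrite leqNgt; apply/negP => down.
have ux : (u <= x)%N by apply: ltnW (leq_trans uw wx).
have bu_u := underbid ux.
have Hu := br ux (ltnW (leq_trans down bu_u)).
have Hw := br wx (ltnW (leq_ltn_trans bu_u uw)).
have gaps : [/\ u - bid b w = (u - bid b u) + (bid b u - bid b w),
              w - bid b u = (w - u) + (u - bid b u)
            & w - bid b w = (w - u) + (u - bid b u) + (bid b u - bid b w)]%N.
  by split; lia.
case: gaps Hu Hw => -> -> -> Hu Hw.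
have w_above_u : (0 < w - u)%N by rewrite subn_gt0.
have bid_gap : (0 < bid b u - bid b w)%N by rewrite subn_gt0.
have := crossing_forces_zero w_above_u bid_gap Hu Hw.
by apply/eqP; rewrite -lt0n expn_gt0 pos.
Qed.

Lemma staircase_bid_lt m s t : staircase b m -> (m <= x)%N -> (s <= m)%N ->
  (s <= t)%N -> (2 <= t)%N -> (bid b s < t)%N.
Proof.
move=> stair mx sm st t2; case: (ltnP s 2) => [s_small | s_big].
  by apply: leq_ltn_trans (underbid (leq_trans sm mx)) _; lia.
by rewrite stair ?s_big //; lia.
Qed.

Lemma staircase_undercut m : (0 < k)%N -> (4 <= m <= x)%N -> staircase b m ->
  (count_below b m.-1 <= m)%N -> (2 * m.-1 ^ k <= m ^ k)%N.
Proof.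
move=> k0 /andP[m4 mx] stair top.
have low : (m.-1 <= count_below b m.-2)%N.
  apply: count_below_lb; first lia.
  by move=> s sm; apply: (staircase_bid_lt stair); lia.
have undercut : (2 * count_below b m.-2 ^ k <= count_below b m.-1 ^ k)%N.
  have := br mx (leq_trans (leq_pred _) (leq_pred m)); rewrite stair; last lia.
  have -> : (m - m.-2 = 2)%N by lia.
  have -> : (m - m.-1 = 1)%N by lia.
  by rewrite mul1n.
apply: leq_trans (leq_trans undercut _); last by rewrite leq_exp2r.
by rewrite leq_mul2l /= leq_exp2r.
Qed.

Lemma bid_floor v : (3 <= v <= x)%N -> staircase b v.-1 ->
  forall w, (v.-1 <= w <= x)%N -> (v.-2 <= bid b w)%N.
Proof.
move=> /andP[v3 vx] stair w /andP[lo wx].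
have prev : bid b v.-1 = v.-2 by rewrite stair; lia.
have [<-|w_later] := eqVneq v.-1 w; first by rewrite prev.
rewrite -prev; apply: bid_monotone; first lia.
rewrite prev; apply: count_below_lb => // s; rewrite ltnS leqn0 => /eqP ->.
by apply: leq_ltn_trans (underbid (leq0n x)) _; lia.
Qed.

Hypothesis k2 : (2 <= k)%N.

(* Extending the staircase, value v cannot bid v - 2: either value v gains
   by raising to v - 1 or value v - 1 gains by lowering to v - 3. *)
Lemma staircase_no_skip v : (3 <= v <= x)%N -> staircase b v.-1 ->
  bid b v <> v.-2.
Proof.
move=> v_range stair skip; have /andP[v3 vx] := v_range.
have floor := bid_floor v_range stair.
have top : (count_below b v.-2 <= v.-1)%N.
  apply: count_below_ub => s sx; apply: contraTT; rewrite -leqNgt => ge.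
  by rewrite -leqNgt floor ?ge.
have wide : (v.+1 <= count_below b v.-1)%N.
  apply: count_below_lb; first lia.
  move=> s; rewrite ltnS leq_eqVlt => /predU1P[->|sv]; first by rewrite skip; lia.
  by apply: (staircase_bid_lt stair); lia.
have jump : (v.+1 ^ k <= 2 * v.-1 ^ k)%N.
  have := br vx (leq_pred v); rewrite skip.
  have -> : (v - v.-1 = 1)%N by lia.
  have -> : (v - v.-2 = 2)%N by lia.
  rewrite mul1n => deviate.
  apply: leq_trans (leq_trans deviate _); first by rewrite leq_exp2r; lia.
  by rewrite leq_mul2l /= leq_exp2r //; lia.
have k0 : (0 < k)%N by lia.
have [v_small | v5] := leqP v 4.
  (* For v = 3, 4 raising to v - 1 alone is already profitable. *)
  have gap : (2 * v.-1 ^ k < v.+1 ^ k)%N.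
    apply: pow_ratio_lt => //; first lia.
    by have [->|->] : v = 3 \/ v = 4 by lia.
  by move: gap; rewrite ltnNge jump.
have undercut : (2 * v.-2 ^ k <= v.-1 ^ k)%N.
  by apply: staircase_undercut => //; lia.
by have := double_undercut_bound k0 jump undercut; rewrite leqNgt; lia.
Qed.

Hypothesis shade : shades b.

Lemma staircase_step v : (2 <= v <= x)%N -> staircase b v.-1 -> bid b v = v.-1.
Proof.
move=> /andP[v2 vx] stair; have below := shade (introT andP (conj v2 vx)).
have [//|off] := eqVneq (bid b v) v.-1.
have [v_eq2 | v3] := leqP v 2.
  (* Bidding 0 at value 2 never wins, while bidding 1 beats value 0. *)
  have zero_bid : bid b v = 0%N by lia.
  have won_at_one : (0 < count_below b 1)%N.
    apply: count_below_lb => // s; rewrite ltnS leqn0 => /eqP ->.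
    exact: underbid (leq0n x).
  have := br vx (ltnW v2); rewrite zero_bid count_below0 exp0n ?muln0; last lia.
  rewrite leqn0 muln_eq0 expn_eq0 (negbTE (lt0n_neq0 won_at_one)) orbF subn_eq0.
  lia.
have v_range : (3 <= v <= x)%N by rewrite v3 vx.
exfalso; apply: (staircase_no_skip v_range stair).
have := bid_floor v_range stair (introT andP (conj (leq_pred v) vx)).
lia.
Qed.

Lemma staircase_full : staircase b x.
Proof.
move=> v; elim/ltn_ind: v => v IH v_range; apply: staircase_step => // s s_range.
by apply: IH; lia.
Qed.

Lemma top_undercut : (4 <= x)%N -> (2 * x.-1 ^ k <= x ^ k)%N.
Proof.
move=> x4; have stair := staircase_full.
apply: staircase_undercut => //; [lia | by rewrite x4 leqnn |].
apply: count_below_ub => s sx; apply: contraTT; rewrite -!leqNgt => sx'.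
have -> : s = x by apply/eqP; rewrite eqn_leq sx.
by rewrite stair //; lia.
Qed.

End BestReply.

Local Open Scope ring_scope.

Lemma sum_by_coordinate (R : nmodType) (I T : finType) (i : I)
    (F : {ffun I -> T} -> R) :
  \sum_(v : {ffun I -> T}) F v = \sum_(t : T) \sum_(v : {ffun I -> T} | v i == t) F v.
Proof. exact: (partition_big (fun v : {ffun I -> T} => v i) predT). Qed.

Lemma sum_cmp_single (R : numDomainType) (T : finType) (f g : T -> R) (v : T) :
  (forall t, t != v -> f t = g t) ->
  ((\sum_t f t <= \sum_t g t) = (f v <= g v)) /\
  ((\sum_t f t < \sum_t g t) = (f v < g v)).
Proof.
move=> agree; rewrite (bigD1 v) //= [\sum_t g t](bigD1 v) //=.
rewrite (eq_bigr g) => [|t /= /agree //].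
by rewrite lerD2r ltrD2r.
Qed.

Section Payoff.
Variables (R : realType) (n x : nat).
Implicit Types (p q : profile n x) (i : 'I_n).

(* (x+1)^(n-1) times the probability that bid t beats all of i's opponents. *)
Definition win_weight q i (t : nat) : R :=
  \prod_(j | j != i) (count_below (q j) t)%:R.

(* Interim payoff (scaled by (x+1)^(n-1)) of bidder i with value v bidding t. *)
Definition interim q i (t v : nat) : R := (v%:R - t%:R) * win_weight q i t.

Lemma winsE p i v :
  ((wins p i v)%:R : R) = \prod_(j | j != i) ((p j (v j) < p i (v i))%N)%:R.
Proof.
rewrite /wins; case: forallP => [beats | /forallP].
  by rewrite big1 // => j /(implyP (beats j)) ->.
rewrite negb_forall => /existsP[j]; rewrite negb_imply => /andP[ji /negbTE loses].
by rewrite (bigD1 j) //= loses mul0r.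
Qed.

Lemma payoffE p i :
  payoff R p i = ((x.+1 ^ n)%:R)^-1 * \sum_(t : 'I_x.+1) interim p i (p i t) t.
Proof.
rewrite /payoff (sum_by_coordinate i); congr (_ * _); apply: eq_bigr => t _.
pose h j (s : 'I_x.+1) : R :=
  if j == i then (s == t)%:R * ((t : nat)%:R - (p i t : nat)%:R)
  else ((p j s < p i t)%N)%:R.
(* Each summand is a product over bidders, so the sum over profiles factors. *)
rewrite big_mkcond.
rewrite (eq_bigr (fun v : {ffun 'I_n -> 'I_x.+1} => \prod_j h j (v j))); last first.
  move=> v _; rewrite (bigD1 i) //= /h eqxx.
  have [vt|_] := eqVneq (v i) t; last by rewrite mulr0n !mul0r.
  rewrite winsE vt mul1r; congr (_ * _).
  by apply: eq_bigr => j /negbTE ->.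
rewrite -bigA_distr_bigA (bigD1 i) //= /h eqxx -big_distrl /= (bigD1 t) //= eqxx.
rewrite big1 ?addr0 ?mul1r => [|s /negbTE -> //]; congr (_ * _).
by apply: eq_bigr => j /negbTE ->; rewrite natr_sum.
Qed.

Lemma payoff_updE q i (b : bidfun x) :
  payoff R (upd q i b) i =
  ((x.+1 ^ n)%:R)^-1 * \sum_(t : 'I_x.+1) interim q i (b t) t.
Proof.
rewrite payoffE /upd eqxx; congr (_ * _); apply: eq_bigr => t _.
by congr (_ * _); apply: eq_bigr => j /negbTE ->.
Qed.

Lemma single_deviation q i (b b' : bidfun x) (v : 'I_x.+1) :
  (forall t, t != v -> b t = b' t) ->
  ((payoff R (upd q i b) i <= payoff R (upd q i b') i) =
     (interim q i (b v) v <= interim q i (b' v) v)) /\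
  ((payoff R (upd q i b) i < payoff R (upd q i b') i) =
     (interim q i (b v) v < interim q i (b' v) v)).
Proof.
move=> agree; rewrite !payoff_updE.
have pos : 0 < ((x.+1 ^ n)%:R : R)^-1 by rewrite invr_gt0 ltr0n expn_gt0.
by rewrite ler_pM2l // ltr_pM2l //; apply: sum_cmp_single => t /agree ->.
Qed.

Lemma win_weight_ge0 q i t : 0 <= win_weight q i t.
Proof. by apply: prodr_ge0 => j _; apply: ler0n. Qed.

Lemma win_weight_zero_bids i t : (0 < t)%N ->
  0 < win_weight (fun _ _ => ord0) i t.
Proof.
move=> t0; apply: prodr_gt0 => j _; rewrite ltr0n.
by apply: (@count_below_lb _ _ 1%N) => // s _; rewrite /bid.
Qed.

Lemma win_weight_sym (b : bidfun x) i t :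
  win_weight (fun _ => b) i t = (count_below b t ^ n.-1)%:R.
Proof. by rewrite /win_weight prodr_const cardC1 card_ord natrX. Qed.

Lemma interim_sym (b : bidfun x) i (t v : nat) : (t <= v)%N ->
  interim (fun _ => b) i t v = ((v - t) * count_below b t ^ n.-1)%:R.
Proof. by move=> tv; rewrite /interim win_weight_sym natrM natrB. Qed.

Lemma interim_le0 q i (t v : nat) : (v <= t)%N -> interim q i t v <= 0.
Proof.
by move=> vt; rewrite /interim mulr_le0_ge0 ?win_weight_ge0 // subr_le0 ler_nat.
Qed.

Lemma interim_ge0 q i (t v : nat) : (t <= v)%N -> 0 <= interim q i t v.
Proof.
by move=> tv; rewrite /interim mulr_ge0 ?win_weight_ge0 // subr_ge0 ler_nat.
Qed.

End Payoff.

Section Equilibrium.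
Variables (R : realType) (n x : nat) (b : bidfun x).

(* Lowering the bid at a value v where b bids at least v to v - 1 never
   hurts, and strictly helps against opponents who always bid 0 (provided
   the bid at v was an overbid or v >= 2). *)
Lemma lowering_dominates (i : 'I_n) (v : 'I_x.+1) :
  (v <= b v)%N -> (v < b v)%N || (1 < v)%N -> weakly_dominated R i b.
Proof.
move=> high profitable.
pose b' : bidfun x := fun t => if t == v then inord v.-1 else b t.
have b'v : (b' v : nat) = v.-1.
  by rewrite /b' eqxx inordK // (leq_ltn_trans (leq_pred v)).
have agree : forall t, t != v -> b t = b' t by move=> t /negbTE tv; rewrite /b' tv.
exists b'; split=> [q|].
  have [-> _] := single_deviation R q i agree.
  by rewrite (le_trans (interim_le0 R q i high)) // interim_ge0 // b'v leq_pred.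
pose zero_bids : profile n x := fun _ _ => ord0.
exists zero_bids; have [_ ->] := single_deviation R zero_bids i agree.
have [over | not_over] := ltnP v (b v).
  apply: (@lt_le_trans _ _ 0); last by rewrite interim_ge0 // b'v leq_pred.
  rewrite /interim pmulr_llt0 ?subr_lt0 ?ltr_nat //.
  by apply: win_weight_zero_bids; apply: leq_ltn_trans over.
have at_value : (b v : nat) = v by apply/eqP; rewrite eqn_leq high not_over.
have v2 : (1 < v)%N by move: profitable; rewrite at_value ltnn.
rewrite {1}/interim at_value subrr mul0r /interim b'v mulr_gt0 //.
  by rewrite subr_gt0 ltr_nat; lia.
by apply: win_weight_zero_bids; lia.
Qed.

Lemma undominated_bids (i : 'I_n) :
  ~ weakly_dominated R i b -> underbids b /\ shades b.
Proof.
move=> undominated; split=> [v vx | v /andP[v2 vx]];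
  have v_val : (inord v : 'I_x.+1) = v :> nat by rewrite inordK.
- rewrite /bid leqNgt; apply/negP => over; apply: undominated.
  by apply: (@lowering_dominates i (inord v)); rewrite v_val ?over // ltnW.
- rewrite /bid ltnNge; apply/negP => high; apply: undominated.
  by apply: (@lowering_dominates i (inord v)); rewrite v_val ?high ?v2 ?orbT.
Qed.

Lemma best_reply_of_BNE : (0 < n)%N -> is_BNE R (fun _ : 'I_n => b) ->
  underbids b -> best_reply n.-1 b.
Proof.
move=> n0 bne underbid v t vx tv.
pose i := Ordinal n0; pose p : profile n x := fun _ => b.
pose b' : bidfun x := fun s => if s == inord v then inord t else b s.
have agree : forall s, s != inord v -> b' s = b s by move=> s /negbTE sv; rewrite /b' sv.
have := bne i b'; rewrite (_ : payoff R p i = payoff R (upd p i b) i); last first.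
  by rewrite payoff_updE payoffE.
have [-> _] := single_deviation R p i agree.
have tx : (t < x.+1)%N by rewrite ltnS (leq_trans tv vx).
rewrite /b' eqxx !inordK // -/(bid b v) !interim_sym ?underbid // ler_nat.
exact: id.
Qed.

End Equilibrium.

Lemma threshold_gap (R : realType) (k x : nat) : (0 < k)%N ->
  2 `^ (k%:R^-1) / (2 `^ (k%:R^-1) - 1) < (x%:R : R) ->
  (x ^ k < 2 * x.-1 ^ k)%N.
Proof.
move=> k0; set c : R := 2 `^ _ => threshold.
have c0 : 0 <= c by apply: powR_ge0.
(* c = 2^(1/k) satisfies c^k = 2 and c > 1, so x < c (x - 1). *)
have ck : c ^+ k = 2.
  rewrite -powR_mulrn // /c -powRrM mulVf ?powRr1 //.
  by rewrite pnatr_eq0 -lt0n.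
have c1 : 1 < c.
  rewrite ltNge; apply/negP => cle.
  have : c ^+ k <= 1 by apply: exprn_ile1.
  by rewrite ck; lra.
move: threshold; rewrite ltr_pdivrMr ?subr_gt0 // => threshold.
have x1 : (1 <= x)%N.
  rewrite lt0n; apply/negP => /eqP x0; move: threshold; rewrite x0 mul0r; lra.
have scaled : (x%:R : R) < c * x.-1%:R by rewrite -subn1 natrB //; nra.
have : (x%:R : R) ^+ k < (c * x.-1%:R) ^+ k by rewrite ltrXn2r // -?lt0n //.
by rewrite exprMn ck -!natrX -natrM ltr_nat.
Qed.

Theorem proposition3 (R : realType) (n x : nat) :
  (3 <= n)%N ->
  (2 `^ (((n - 1)%N)%:R^-1) / (2 `^ (((n - 1)%N)%:R^-1) - 1) < (x%:R : R)) ->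
  forall b : bidfun x, ~ symmetric_equilibrium R n b.
Proof.
move=> n3 threshold b [bne undominated].
have n0 : (0 < n)%N by lia.
have [underbid shade] := undominated_bids (undominated (Ordinal n0)).
have br := best_reply_of_BNE n0 bne underbid.
have k2 : (2 <= n.-1)%N by lia.
have k0 : (0 < n - 1)%N by lia.
have := threshold_gap k0 threshold; rewrite subn1 => gap.
have x4 := gap_forces_four k2 gap.
by move: (top_undercut underbid br k2 shade x4); rewrite leqNgt gap.
Qed.
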